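(* Let $A\in\mathcal E_n$ be nonzero with $\operatorname{rk}(A)=\operatorname{st}_+(A)=r$, Perron eigenvalue $\lambda_1$ and normalised Perron eigenvector $u$. Suppose $$A=U(\lambda_1\oplus D_1)U^T=BCB^T,$$ where $D_1$ is an $(r-1)\times(r-1)$ diagonal matrix with nonzero diagonal entries, $U=\begin{pmatrix}u&U_1\end{pmatrix}\in\mathbb R^{n\times r}$ with $U^TU=I_r$, $B\in\mathbb R_+^{n\times r}$, and $C\in\mathbb R_+^{r\times r}$ is symmetric. Then there exists an invertible $T\in\mathbb R^{r\times r}$ whose first column is entrywise nonnegative and such that the first row of $T^{-1}$ is entrywise nonnegative, with $B=UT^{-1}$ and $C=T(\lambda_1\oplus D_1)T^T$. If moreover $A$ is irreducible, then the first column of $T$ and the first row of $T^{-1}$ are entrywise positive.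
   Context: $\mathcal S_n^+$ is the set of $n\times n$ symmetric entrywise nonnegative real matrices; $\mathbb R_+^{p\times q}$ the entrywise nonnegative $p\times q$ real matrices. The SNT-rank $\operatorname{st}_+(A)$ of $A\in\mathcal S_n^+$ is the minimal $k$ such that $A=BCB^T$ with $B\in\mathbb R_+^{n\times k}$ and $C\in\mathcal S_k^+$. $\mathcal E_n=\{A\in\mathcal S_n^+:\operatorname{rk}(A)=\operatorname{st}_+(A)\}$. The Perron eigenvalue is the spectral radius $\lambda_1$ of $A$, and a normalised Perron eigenvector is an entrywise nonnegative eigenvector $u$ for $\lambda_1$ with $u^Tu=1$. For matrices $X,Y$, $X\oplus Y=\begin{pmatrix}X&0\\0&Y\end{pmatrix}$. *)

From mathcomp Require Import all_boot all_order all_algebra.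
From mathcomp Require Import reals.
Set Implicit Arguments. Unset Strict Implicit. Unset Printing Implicit Defensive.
Import Order.TTheory GRing.Theory Num.Theory.
Local Open Scope ring_scope.

Section Defs.
Variable R : realType.

Definition nonneg_mx (p q : nat) (M : 'M[R]_(p, q)) : Prop :=
  forall i j, 0 <= M i j.

Definition sym_mx (k : nat) (M : 'M[R]_k) : Prop := M^T = M.

Definition SNN (n : nat) (A : 'M[R]_n) : Prop := nonneg_mx A /\ sym_mx A.

Definition snt_fact (n k : nat) (A : 'M[R]_n) : Prop :=
  exists (B : 'M[R]_(n, k)) (C : 'M[R]_k),
    nonneg_mx B /\ SNN C /\ A = B *m C *m B^T.

Definition snt_rank_is (n : nat) (A : 'M[R]_n) (k : nat) : Prop :=
  snt_fact k A /\ forall k', snt_fact k' A -> (k <= k')%N.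

Definition in_E (n : nat) (A : 'M[R]_n) : Prop :=
  SNN A /\ snt_rank_is A (\rank A).

(* Perron eigenvalue = spectral radius: an eigenvalue dominating the
   absolute value of every eigenvalue (A symmetric: all eigenvalues real) *)
Definition perron_eigenvalue (n : nat) (A : 'M[R]_n) (l : R) : Prop :=
  eigenvalue A l /\ forall mu, eigenvalue A mu -> `|mu| <= l.

Definition normalised_perron_vector (n : nat) (A : 'M[R]_n) (l : R)
  (u : 'cV[R]_n) : Prop :=
  nonneg_mx u /\ A *m u = l *: u /\ u^T *m u = 1%:M.

Definition irreducible_mx (n : nat) (A : 'M[R]_n) : Prop :=
  forall S : {set 'I_n}, S != set0 -> S != setT ->
    exists i j, [/\ i \in S, j \notin S & A i j != 0].

Definition dsum_mx (p q : nat) (X : 'M[R]_p) (Y : 'M[R]_q) : 'M[R]_(p + q) :=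
  block_mx X 0 0 Y.

End Defs.

From mathcomp Require Import all_boot all_order all_algebra.
From mathcomp Require Import reals.
Set Implicit Arguments. Unset Strict Implicit. Unset Printing Implicit Defensive.
Import Order.TTheory GRing.Theory Num.Theory.
Local Open Scope ring_scope.

(* Write A = U L U^T = B C B^T with U^T U = I and
   L = lambda1 (+) D1, and put S := U^T B.  Then
   - L = U^T A U = S C S^T, and rank A = r forces L, hence S and C, to be
     invertible;
   - projecting onto the orthogonal complement of the columns of U kills
     B C B^T = A, hence kills B (C and S are invertible), so B = U S;
   - T := S^-1 therefore satisfies B = U T^-1 and C = T L T^T.
   The first row of T^-1 = S is u^T B >= 0, and the first column of T L = C S^T
   reads lambda1 T(i,0) = sum_j C(i,j) S(0,j) >= 0 with lambda1 > 0.  When A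
   is irreducible the Perron vector u is positive, so every S(0,j) > 0 (a zero
   would kill a column of B, hence of S) and every T(i,0) > 0 (a zero would
   kill a row of C). *)

Section LinearAlgebra.
Variable F : fieldType.

Lemma zero_row_not_unit (k : nat) (M : 'M[F]_k) (i : 'I_k) :
  (forall j, M i j = 0) -> M \notin unitmx.
Proof.
move=> Mi0; apply/negP => Mu.
have := congr1 (fun N : 'M[F]_k => N i i) (mulmxV Mu) => /=.
rewrite !mxE eqxx big1 => [/eqP|j _]; first by rewrite eq_sym oner_eq0.
by rewrite Mi0 mul0r.
Qed.

Lemma zero_col_not_unit (k : nat) (M : 'M[F]_k) (j : 'I_k) :
  (forall i, M i j = 0) -> M \notin unitmx.
Proof.
by move=> Mj0; rewrite -unitmx_tr; apply: (zero_row_not_unit (i := j)) => i; rewrite mxE.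
Qed.

Lemma full_rank_middle_unit (m k : nat) (X : 'M[F]_(m, k)) (L : 'M[F]_k)
    (Y : 'M[F]_(k, m)) :
  \rank (X *m L *m Y) = k -> L \in unitmx.
Proof.
move=> rkXLY; rewrite -row_free_unit /row_free eqn_leq rank_leq_row /= -{1}rkXLY.
exact: leq_trans (mxrankM_maxl _ _) (mxrankM_maxr _ _).
Qed.

Section Factorizations.
Variables (n k : nat) (U : 'M[F]_(n, k)) (L : 'M[F]_k).
Variables (B : 'M[F]_(n, k)) (C : 'M[F]_k).
Hypothesis orthoU : U^T *m U = 1%:M.
Hypothesis twoFactorizations : U *m L *m U^T = B *m C *m B^T.

Lemma compressed_factorization : L = (U^T *m B) *m C *m (U^T *m B)^T.
Proof.
have -> : L = U^T *m (U *m L *m U^T) *m U.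
  by rewrite !mulmxA orthoU mul1mx -mulmxA orthoU mulmx1.
by rewrite twoFactorizations trmx_mul trmxK !mulmxA.
Qed.

Lemma factor_in_range :
  C \in unitmx -> U^T *m B \in unitmx -> B = U *m (U^T *m B).
Proof.
move=> Cu Su; set P := 1%:M - U *m U^T.
have PU : P *m U = 0 by rewrite /P mulmxBl mul1mx -mulmxA orthoU mulmx1 subrr.
have PBC : P *m B *m C = 0.
  have StU : (U^T *m B)^T \in unitmx by rewrite unitmx_tr.
  rewrite -[P *m B *m C]mulmx1 -(mulmxV StU) trmx_mul trmxK !mulmxA.
  by rewrite -(mulmxA P) -(mulmxA P) -twoFactorizations !mulmxA PU !mul0mx.
have PB : P *m B = 0.
  by rewrite -[P *m B]mulmx1 -(mulmxV Cu) mulmxA PBC mul0mx.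
by apply/eqP; rewrite -subr_eq0 -{1}[B]mul1mx mulmxA -mulmxBl PB.
Qed.

End Factorizations.

Lemma congruence_solve (k : nat) (S L C : 'M[F]_k) :
  S \in unitmx -> L = S *m C *m S^T -> C = invmx S *m L *m (invmx S)^T.
Proof.
move=> Su ->; rewrite trmx_inv !mulmxA mulVmx // mul1mx.
by rewrite -mulmxA mulmxV ?unitmx_tr // mulmx1.
Qed.

End LinearAlgebra.

Section Signs.
Variable R : realType.

Lemma pos_weighted_sum_gt0 (k : nat) (a b : 'I_k -> R) :
  (forall l, 0 < a l) -> (forall l, 0 <= b l) -> ~ (forall l, b l = 0) ->
  0 < \sum_l a l * b l.
Proof.
move=> apos bge bn0; rewrite lt_def sumr_ge0 => [|l _]; last first.
  exact: mulr_ge0 (ltW (apos l)) (bge l).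
rewrite andbT; apply/negP => /eqP /psumr_eq0P sum0; apply: bn0 => l.
have /eqP := sum0 (fun l _ => mulr_ge0 (ltW (apos l)) (bge l)) l isT.
by rewrite mulf_eq0 gt_eqF //= => /eqP.
Qed.

Lemma perron_eigenvalue_ge0 (n : nat) (A : 'M[R]_n) (l : R) :
  perron_eigenvalue A l -> 0 <= l.
Proof. by move=> [eigl perl]; exact: le_trans (normr_ge0 l) (perl _ eigl). Qed.

Lemma dsum_unit_head_neq0 (k : nat) (a : R) (D : 'M[R]_k) :
  dsum_mx (a%:M : 'M[R]_1) D \in unitmx -> a != 0.
Proof.
rewrite unitmxE /dsum_mx det_ublock det_scalar1 unitfE.
by apply: contra => /eqP ->; rewrite mul0r.
Qed.

(* A normalised nonnegative eigenvector of an irreducible nonnegative matrix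
   is positive: its zero set would otherwise be a proper nonempty invariant
   index set. *)
Lemma irreducible_eigenvector_pos (n : nat) (A : 'M[R]_n) (l : R) (u : 'cV[R]_n) :
  nonneg_mx A -> irreducible_mx A -> normalised_perron_vector A l u ->
  forall k, 0 < u k ord0.
Proof.
move=> nnA irr [nnu [Au uu]].
set Z := [set k | u k ord0 == 0].
have ZnT : Z != setT.
  apply/negP => /eqP ZT.
  have := congr1 (fun M : 'M[R]_1 => M ord0 ord0) uu => /=.
  rewrite !mxE big1 ?eqxx ?mulr1n => [/eqP|k _]; first by rewrite eq_sym oner_eq0.
  have : k \in Z by rewrite ZT inE.
  by rewrite inE mxE => /eqP ->; rewrite mul0r.
case: (eqVneq Z set0) => [Z0 k|Zn0].
  rewrite lt_def nnu andbT; apply/negP => uk0.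
  have : k \in Z by rewrite inE.
  by rewrite Z0 inE.
have [i [j [iZ jZ Aij]]] := irr Z Zn0 ZnT.
have := congr1 (fun v : 'cV[R]_n => v i ord0) Au => /=.
move: iZ; rewrite inE => /eqP ui0.
rewrite mxE [in RHS]mxE ui0 mulr0 => /psumr_eq0P sum0.
have /eqP := sum0 (fun k _ => mulr_ge0 (nnA i k) (nnu k ord0)) j isT.
by rewrite mulf_eq0 (negbTE Aij) /=; move: jZ; rewrite inE => /negbTE ->.
Qed.

Lemma first_row_compressed (n r' : nat) (u : 'cV[R]_n) (U1 : 'M[R]_(n, r'))
    (B : 'M[R]_(n, 1 + r')) (j : 'I_(1 + r')) :
  ((row_mx u U1)^T *m B) (lshift r' ord0) j = \sum_k u k ord0 * B k j.
Proof. by rewrite mxE; apply: eq_bigr => k _; rewrite mxE row_mxEl. Qed.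

Lemma first_row_compressed_ge0 (n r' : nat) (u : 'cV[R]_n) (U1 : 'M[R]_(n, r'))
    (B : 'M[R]_(n, 1 + r')) :
  nonneg_mx u -> nonneg_mx B ->
  forall j, 0 <= ((row_mx u U1)^T *m B) (lshift r' ord0) j.
Proof.
move=> nnu nnB j; rewrite first_row_compressed.
by apply: sumr_ge0 => k _; apply: mulr_ge0.
Qed.

(* For u positive it is even positive when (u | U1)^T B is invertible, since
   a zero entry would kill a column of B and hence of (u | U1)^T B. *)
Lemma first_row_compressed_gt0 (n r' : nat) (u : 'cV[R]_n) (U1 : 'M[R]_(n, r'))
    (B : 'M[R]_(n, 1 + r')) :
  (forall k, 0 < u k ord0) -> nonneg_mx B -> (row_mx u U1)^T *m B \in unitmx ->
  forall j, 0 < ((row_mx u U1)^T *m B) (lshift r' ord0) j.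
Proof.
move=> upos nnB Su j; rewrite first_row_compressed.
apply: pos_weighted_sum_gt0 => [//|k|Bj0]; first exact: nnB.
apply: (negP (zero_col_not_unit (j := j) _)) Su => i.
by rewrite mxE big1 // => k _; rewrite Bj0 mulr0.
Qed.

(* First column of S^-1 L = C S^T when L = S C S^T and L = a (+) D:
   a (S^-1)(i,0) = sum_j C(i,j) S(0,j). *)
Lemma first_col_inverse (r' : nat) (a : R) (D : 'M[R]_r') (S C : 'M[R]_(1 + r'))
    (i : 'I_(1 + r')) :
  S \in unitmx -> dsum_mx (a%:M : 'M[R]_1) D = S *m C *m S^T ->
  a * invmx S i (lshift r' ord0) = \sum_j C i j * S (lshift r' ord0) j.
Proof.
move=> Su LS.
have TL : invmx S *m dsum_mx (a%:M : 'M[R]_1) D = C *m S^T.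
  by rewrite LS !mulmxA mulVmx // mul1mx.
have -> : a * invmx S i (lshift r' ord0)
    = (invmx S *m dsum_mx (a%:M : 'M[R]_1) D) i (lshift r' ord0).
  rewrite -{2}[invmx S]hsubmxK /dsum_mx mul_row_block !mulmx0 addr0.
  by rewrite mul_mx_scalar row_mxEl !mxE.
by rewrite TL mxE; apply: eq_bigr => j _; rewrite mxE.
Qed.

Section FirstColumnOfInverse.
Variables (r' : nat) (a : R) (D : 'M[R]_r') (S C : 'M[R]_(1 + r')).
Hypotheses (apos : 0 < a) (nnC : nonneg_mx C) (Su : S \in unitmx).
Hypothesis congruent : dsum_mx (a%:M : 'M[R]_1) D = S *m C *m S^T.

Lemma first_col_inverse_ge0 :
  (forall j, 0 <= S (lshift r' ord0) j) -> forall i, 0 <= invmx S i (lshift r' ord0).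
Proof.
move=> S0ge i; rewrite -(pmulr_rge0 _ apos) (first_col_inverse i Su congruent).
by apply: sumr_ge0 => j _; apply: mulr_ge0.
Qed.

(* A positive first row of S gives a positive first column of S^-1 when C is
   invertible, since a zero entry would kill a row of C. *)
Lemma first_col_inverse_gt0 :
  C \in unitmx -> (forall j, 0 < S (lshift r' ord0) j) ->
  forall i, 0 < invmx S i (lshift r' ord0).
Proof.
move=> Cu S0pos i; rewrite -(pmulr_rgt0 _ apos) (first_col_inverse i Su congruent).
under eq_bigr do rewrite mulrC.
apply: pos_weighted_sum_gt0 => [//|j|Ci0]; first exact: nnC.
exact: (negP (zero_row_not_unit (i := i) Ci0)).
Qed.

End FirstColumnOfInverse.

End Signs.

(* rank r is written as 1 + r' (A nonzero forces r >= 1); index 0 is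
   lshift r' ord0 *)
Theorem mainTheorem10 (R : realType) (n r' : nat) (A : 'M[R]_n)
  (lambda1 : R) (u : 'cV[R]_n) (U1 : 'M[R]_(n, r')) (D1 : 'M[R]_r')
  (B : 'M[R]_(n, 1 + r')) (C : 'M[R]_(1 + r')) :
  in_E A -> A != 0 -> \rank A = (1 + r')%N -> snt_rank_is A (1 + r')%N ->
  perron_eigenvalue A lambda1 -> normalised_perron_vector A lambda1 u ->
  is_diag_mx D1 -> (forall i, D1 i i != 0) ->
  (row_mx u U1)^T *m row_mx u U1 = 1%:M ->
  A = row_mx u U1 *m dsum_mx (lambda1%:M : 'M[R]_1) D1 *m (row_mx u U1)^T ->
  nonneg_mx B -> nonneg_mx C -> sym_mx C ->
  A = B *m C *m B^T ->
  exists T : 'M[R]_(1 + r'),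
    T \in unitmx /\
    (forall i, 0 <= T i (lshift r' ord0)) /\
    (forall j, 0 <= invmx T (lshift r' ord0) j) /\
    B = row_mx u U1 *m invmx T /\
    C = T *m dsum_mx (lambda1%:M : 'M[R]_1) D1 *m T^T /\
    (irreducible_mx A ->
           (forall i, 0 < T i (lshift r' ord0)) /\
           (forall j, 0 < invmx T (lshift r' ord0) j)).
Proof.
move=> [[nnA _] _] _ rkA _ perA uPerron _ _ UU AU nnB nnC _ AB.
have [nnu _] := uPerron.
set U := row_mx u U1 in UU AU *; set L := dsum_mx _ D1 in AU *.
set S := U^T *m B.
have Lu : L \in unitmx by apply: (full_rank_middle_unit (X := U) (Y := U^T)); rewrite -AU.
have UL_BC : U *m L *m U^T = B *m C *m B^T by rewrite -AU.
have LS : L = S *m C *m S^T := compressed_factorization UU UL_BC.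
have [Su Cu] : S \in unitmx /\ C \in unitmx.
  by move: Lu; rewrite LS !unitmx_mul unitmx_tr => /andP[/andP[-> ->] _].
have lpos : 0 < lambda1.
  by rewrite lt_def (dsum_unit_head_neq0 Lu) (perron_eigenvalue_ge0 perA).
have S0ge := first_row_compressed_ge0 U1 nnu nnB.
have T0ge := first_col_inverse_ge0 lpos nnC Su LS S0ge.
exists (invmx S); rewrite unitmx_inv invmxK.
split=> //; split=> //; split=> //; split; first exact: factor_in_range UU UL_BC Cu Su.
split; first exact: congruence_solve.
move=> irr; have upos := irreducible_eigenvector_pos nnA irr uPerron.
have S0pos := first_row_compressed_gt0 upos nnB Su.
by split=> //; apply: first_col_inverse_gt0 lpos nnC Su LS Cu S0pos.
Qed.
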